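(* Let $m\in\mathbb{N}$ and $\beta\in(1,\frac{m+\sqrt{m^2+4}}{2})$. For every $x\in(0,\frac{m}{\beta-1})$ there exist $n\ge0$ and maps $a_1,\ldots,a_n\in\{T_{\beta,0},\ldots,T_{\beta,m}\}$ with $(a_j\circ\cdots\circ a_1)(x)\in[0,\frac{m}{\beta-1}]$ for all $j\le n$, such that $(a_n\circ\cdots\circ a_1)(x)$ lies in the interior of the switch region $[\frac{1}{\beta},\frac{(m-1)\beta+1}{\beta(\beta-1)}]$.
   Context: $T_{\beta,i}(x)=\beta x-i$ for $i\in\{0,\ldots,m\}$. *)

From Stdlib Require Import Reals Lra Lia List.
Open Scope R_scope.

Definition T (beta : R) (i : nat) (x : R) : R := beta * x - INR i.

(* apply_maps beta [i1; ...; in] x = (T_{beta,in} o ... o T_{beta,i1})(x):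
   the first map in the list is applied first. *)
Fixpoint apply_maps (beta : R) (ds : list nat) (x : R) : R :=
  match ds with
  | nil => x
  | i :: ds' => apply_maps beta ds' (T beta i x)
  end.

From Stdlib Require Import Reals List Lra Lia Psatz.
Open Scope R_scope.

(* T_0 is multiplication by beta and T_m expands the distance to its fixed
   point L = m/(beta-1) by the factor beta.  Below the switch region we apply
   T_0 and above it T_m, until the orbit enters it.  It cannot jump over the
   region: x <= 1/beta gives beta x <= 1 < U, and x >= U gives T_m x > 1/beta,
   where U is the upper end of the region; both inequalities are equivalent to
   beta^2 < m beta + 1, i.e. to the bound on beta. *)

Definition switch_path (m : nat) (beta x : R) (ds : list nat) : Prop :=
  (forall i, In i ds -> (i <= m)%nat) /\
  (forall j : nat, (j <= length ds)%nat ->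
     0 <= apply_maps beta (firstn j ds) x <= INR m / (beta - 1)) /\
  1 / beta < apply_maps beta ds x < ((INR m - 1) * beta + 1) / (beta * (beta - 1)).

Lemma switch_path_nil m beta x :
  0 <= x <= INR m / (beta - 1) ->
  1 / beta < x < ((INR m - 1) * beta + 1) / (beta * (beta - 1)) ->
  switch_path m beta x nil.
Proof.
  intros Hx Hsw; split; [|split]; [intros i []| |exact Hsw].
  intros j Hj; replace j with 0%nat by (simpl in Hj; lia); exact Hx.
Qed.

Lemma switch_path_cons m beta x i ds :
  (i <= m)%nat -> 0 <= x <= INR m / (beta - 1) ->
  switch_path m beta (T beta i x) ds -> switch_path m beta x (i :: ds).
Proof.
  intros Hi Hx [Hds [Horb Hend]]; split; [|split]; [|intros [|j] Hj|exact Hend].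
  - intros k [<-|Hk]; auto.
  - exact Hx.
  - apply Horb; simpl in Hj; lia.
Qed.

Lemma lt_pos_root_sq (c b : R) :
  0 < b -> b < (c + sqrt (c ^ 2 + 4)) / 2 -> b * b < c * b + 1.
Proof.
  intros Hb Hroot.
  pose proof (sqrt_pos (c ^ 2 + 4)) as Hs.
  assert (Hss : sqrt (c ^ 2 + 4) * sqrt (c ^ 2 + 4) = c ^ 2 + 4)
    by (apply sqrt_sqrt; nra).
  destruct (Rle_dec (2 * b - c) 0); nra.
Qed.

Lemma exists_pow_gt (b c : R) : 1 < b -> exists n, c < b ^ n.
Proof.
  intros Hb.
  destruct (Pow_x_infinity b ltac:(rewrite Rabs_pos_eq; lra) (c + 1)) as [n Hn].
  exists n; specialize (Hn n (le_n n)).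
  rewrite Rabs_pos_eq in Hn by (apply pow_le; lra); lra.
Qed.

Section Escape.
Variables (m : nat) (b : R).
Hypothesis one_lt_b : 1 < b.
Hypothesis b_sq_lt : b * b < INR m * b + 1.
Let L := INR m / (b - 1).
Let U := ((INR m - 1) * b + 1) / (b * (b - 1)).

Lemma b_sq_gap_pos : 0 < (INR m * b + 1 - b * b) / (b * (b - 1)).
Proof. apply Rdiv_lt_0_compat; nra. Qed.

Lemma one_lt_U : 1 < U.
Proof.
  assert (U - 1 = (INR m * b + 1 - b * b) / (b * (b - 1))) by (unfold U; field; lra).
  pose proof b_sq_gap_pos; lra.
Qed.

Lemma L_sub_U : L - U = 1 / b.
Proof. unfold L, U; field; lra. Qed.

Lemma inv_lt_one : 1 / b < 1.
Proof.
  assert (1 - 1 / b = (b - 1) / b) by (field; lra).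
  assert (0 < (b - 1) / b) by (apply Rdiv_lt_0_compat; lra); lra.
Qed.

Lemma T_top_dist x : L - T b m x = b * (L - x).
Proof. unfold T, L; field; lra. Qed.

Lemma inv_lt_T_top x : U <= x -> 1 / b < T b m x.
Proof.
  intros Hx; unfold T.
  assert (b * U - INR m - 1 / b = (INR m * b + 1 - b * b) / (b * (b - 1)))
    by (unfold U; field; lra).
  pose proof b_sq_gap_pos; nra.
Qed.

Lemma escape_low n : forall x, 0 < x <= 1 -> 1 / b < b ^ n * x ->
  exists ds, switch_path m b x ds.
Proof.
  pose proof one_lt_U; pose proof L_sub_U; pose proof inv_lt_one.
  assert (0 < 1 / b) by (apply Rdiv_lt_0_compat; lra).
  induction n as [|n IH]; intros x Hx Hpow.
  - exists nil; apply switch_path_nil; fold L U; simpl in Hpow; lra.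
  - destruct (Rlt_le_dec (1 / b) x) as [Hin|Hbelow].
    + exists nil; apply switch_path_nil; fold L U; lra.
    + assert (HTx : T b 0 x = b * x) by (unfold T; simpl; ring).
      assert (b * x <= 1).
      { assert (b * (1 / b) = 1) by (field; lra); nra. }
      destruct (IH (T b 0 x)) as [ds Hds]; rewrite ?HTx; [nra|simpl in Hpow; lra|].
      exists (0%nat :: ds); apply switch_path_cons; [lia|fold L; lra|exact Hds].
Qed.

Lemma escape_high n : forall x, 1 / b < x < L -> L - U < b ^ n * (L - x) ->
  exists ds, switch_path m b x ds.
Proof.
  pose proof one_lt_U; pose proof L_sub_U; pose proof inv_lt_one.
  assert (0 < 1 / b) by (apply Rdiv_lt_0_compat; lra).
  induction n as [|n IH]; intros x Hx Hpow.
  - exists nil; apply switch_path_nil; fold L U; simpl in Hpow; lra.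
  - destruct (Rlt_le_dec x U) as [Hin|Habove].
    + exists nil; apply switch_path_nil; fold L U; lra.
    + pose proof (inv_lt_T_top x Habove); pose proof (T_top_dist x).
      destruct (IH (T b m x)) as [ds Hds]; [nra|simpl in Hpow; nra|].
      exists (m :: ds); apply switch_path_cons; [lia|fold L; lra|exact Hds].
Qed.

End Escape.

Theorem lemma2p4 (m : nat) (beta : R) :
  1 < beta ->
  beta < (INR m + sqrt (INR m ^ 2 + 4)) / 2 ->
  forall x : R, 0 < x < INR m / (beta - 1) ->
  exists ds : list nat,
    (forall i, In i ds -> (i <= m)%nat) /\
    (forall j : nat, (j <= length ds)%nat ->
       0 <= apply_maps beta (firstn j ds) x <= INR m / (beta - 1)) /\
    1 / beta < apply_maps beta ds x < ((INR m - 1) * beta + 1) / (beta * (beta - 1)).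
Proof.
  intros Hb Hroot x Hx.
  pose proof (lt_pos_root_sq (INR m) beta ltac:(lra) Hroot) as Hsq.
  pose proof (one_lt_U m beta Hb Hsq); pose proof (L_sub_U m beta Hb).
  set (L := INR m / (beta - 1)) in *.
  set (U := ((INR m - 1) * beta + 1) / (beta * (beta - 1))) in *.
  destruct (Rle_dec x (1 / beta)) as [Hlow|Hhigh].
  - destruct (exists_pow_gt beta (1 / beta / x) Hb) as [n Hn].
    apply (escape_low m beta Hb Hsq n); [pose proof (inv_lt_one beta Hb); lra|].
    apply (Rmult_lt_compat_r x) in Hn; [|lra].
    replace (1 / beta / x * x) with (1 / beta) in Hn by (field; lra); exact Hn.
  - destruct (exists_pow_gt beta ((L - U) / (L - x)) Hb) as [n Hn].
    apply (escape_high m beta Hb Hsq n); fold L U; [lra|].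
    apply (Rmult_lt_compat_r (L - x)) in Hn; [|lra].
    replace ((L - U) / (L - x) * (L - x)) with (L - U) in Hn by (field; lra); exact Hn.
Qed.
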